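(* Let $S,Q$ be disjoint finite sets, $\mathcal{M}_S,\mathcal{M}_Q$ matroids on $S$, $Q$, and $A\subseteq S$, $B\subseteq Q$. Then the principal sum $(\mathcal{M}_S,\mathcal{M}_Q;A,B)$ is $\{S,Q\}$-complete.
   Context: Matroids on finite sets, given by bases. For matroids on the same set, $\mathcal{M}_1\vee\mathcal{M}_2$ has bases the maximal sets $b_1\cup b_2$; $\mathbf{0}_X$ has only base $\emptyset$. Let $r_{\mathcal{M}_S}$ be the rank function of $\mathcal{M}_S$. $\mathcal{M}_{SB}$ is the matroid on $S\uplus B$ with rank function $r(X\uplus B_1):=r_{\mathcal{M}_S}(X)+\min\big(r_{\mathcal{M}_S}(X\cup A)-r_{\mathcal{M}_S}(X),\,|B_1|\big)$ for $X\subseteq S$, $B_1\subseteq B$. The principal sum is $(\mathcal{M}_S,\mathcal{M}_Q;A,B):=(\mathcal{M}_{SB}\oplus\mathbf{0}_{Q-B})\vee(\mathcal{M}_Q\oplus\mathbf{0}_S)$, a matroid on $S\uplus Q$. A matroid $\mathcal{M}_{SQ}$ on $S\uplus Q$ is $\{S,Q\}$-complete if whenever $b_S,b'_S\subseteq S$, $b_Q,b'_Q\subseteq Q$ and $b_S\uplus b_Q$, $b_S\uplus b'_Q$, $b'_S\uplus b_Q$ are bases, then $b'_S\uplus b'_Q$ is a base. *)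

From mathcomp Require Import all_boot.
Set Implicit Arguments. Unset Strict Implicit. Unset Printing Implicit Defensive.

Record matroid (T : finType) := Matroid { ground : {set T}; bases : {set {set T}} }.

Section Matroids.
Variable T : finType.
Implicit Types (M : matroid T) (X Y E : {set T}).

Definition is_matroid M : Prop :=
  [/\ bases M != set0,
      (forall b, b \in bases M -> b \subset ground M) &
      (forall b1 b2, b1 \in bases M -> b2 \in bases M ->
        forall x, x \in b1 :\: b2 ->
        exists2 y, y \in b2 :\: b1 & (b1 :\ x) :|: [set y] \in bases M)].

Definition rank M X : nat := \max_(b in bases M) #|X :&: b|.

Definition zero_matroid E : matroid T := Matroid E [set set0].

Definition dsum M1 M2 : matroid T :=
  Matroid (ground M1 :|: ground M2)
          [set b1 :|: b2 | b1 in bases M1, b2 in bases M2].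

Definition munion M1 M2 : matroid T :=
  let U := [set b1 :|: b2 | b1 in bases M1, b2 in bases M2] in
  Matroid (ground M1 :|: ground M2) [set X in U | maxset (mem U) X].

Definition matroid_of_rank E (r : {set T} -> nat) : matroid T :=
  Matroid E [set X : {set T} | [&& X \subset E, r X == #|X| & #|X| == r E]].

Definition rank_SB (MS : matroid T) (A B : {set T}) (Y : {set T}) : nat :=
  let X := Y :&: ground MS in
  let B1 := Y :&: B in
  rank MS X + minn (rank MS (X :|: A) - rank MS X) #|B1|.

Definition M_SB (MS : matroid T) (A B : {set T}) : matroid T :=
  matroid_of_rank (ground MS :|: B) (rank_SB MS A B).

Definition principal_sum (MS MQ : matroid T) (A B : {set T}) : matroid T :=
  munion (dsum (M_SB MS A B) (zero_matroid (ground MQ :\: B)))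
         (dsum MQ (zero_matroid (ground MS))).

Definition SQ_complete (S Q : {set T}) (M : matroid T) : Prop :=
  forall bS bS' bQ bQ' : {set T},
    bS \subset S -> bS' \subset S -> bQ \subset Q -> bQ' \subset Q ->
    bS :|: bQ \in bases M -> bS :|: bQ' \in bases M -> bS' :|: bQ \in bases M ->
    bS' :|: bQ' \in bases M.

End Matroids.

(* The candidate sets of the union are X :|: B1 :|: b2 with b2 a base of MQ and
   X :|: B1 a base of M_SB, i.e. X independent in MS, X :|: A spanning in MS and
   #|X| + #|B1| = rank MS S.  If B1 meets b2, a point of B1 :&: b2 can be traded
   for a point of S extending X, giving a strictly larger candidate; hence the
   bases of the principal sum are exactly the candidates of size
   rank MS S + rank MQ Q.  For bases bS :|: bQ, bS :|: bQ', bS' :|: bQ this forces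
   #|bS'| = #|bS|; since bS' is independent with bS' :|: A spanning (from
   bS' :|: bQ), the splitting bQ' = B1 :|: b2 witnessing bS :|: bQ' also makes
   bS' :|: bQ' a candidate of the right size. *)

From mathcomp Require Import all_boot zify.
Set Implicit Arguments. Unset Strict Implicit. Unset Printing Implicit Defensive.

Section DisjointSets.
Variable T : finType.
Implicit Types X Y Z : {set T}.

Lemma setIUl_id X Y Z : X \subset Z -> [disjoint Y & Z] -> (X :|: Y) :&: Z = X.
Proof. by move=> XZ YZ; rewrite setIUl (setIidPl XZ) (disjoint_setI0 YZ) setU0. Qed.

Lemma cardsU_disjoint X Y : [disjoint X & Y] -> #|X :|: Y| = #|X| + #|Y|.
Proof. by move=> XY; rewrite cardsU (disjoint_setI0 XY) cards0 subn0. Qed.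

End DisjointSets.

Lemma addn_minn_eq (a b c d : nat) : a <= c -> a <= b ->
  (a + minn (b - a) d == c + d) = (a == c) && (c + d <= b).
Proof. lia. Qed.

Section Rank.
Variables (T : finType) (M : matroid T).
Implicit Types X Y b : {set T}.

Definition indep X : Prop := rank M X = #|X|.
Definition spanning X : Prop := rank M (ground M) <= rank M X.

Lemma rank_leq_card X : rank M X <= #|X|.
Proof. by apply/bigmax_leqP => b _; rewrite subset_leq_card ?subsetIl. Qed.

Lemma rankS X Y : X \subset Y -> rank M X <= rank M Y.
Proof.
move=> XY; apply/bigmax_leqP => b bB; apply: leq_trans (leq_bigmax_cond _ bB).
by rewrite subset_leq_card ?setSI.
Qed.

Lemma sub_base_indep X b : b \in bases M -> X \subset b -> indep X.
Proof.
move=> bB Xb; apply/eqP; rewrite eqn_leq rank_leq_card /=.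
by apply: leq_trans (leq_bigmax_cond _ bB); rewrite (setIidPl Xb).
Qed.

Hypothesis matM : is_matroid M.

Lemma base_subset_eq b1 b2 :
  b1 \in bases M -> b2 \in bases M -> b1 \subset b2 -> b1 = b2.
Proof.
case: matM => _ _ exch b1B b2B b12; apply/eqP; rewrite eqEsubset b12.
apply/subsetP => y yb2; apply/negPn/negP => yNb1.
have [|z] := exch b2 b1 b2B b1B y; first by rewrite inE yNb1.
by rewrite inE => /andP[/negP zNb2 /(subsetP b12)].
Qed.

(* Induction on #|b1 :\: b2|: an exchange keeps #|b1| and shrinks b1 :\: b2. *)
Lemma card_bases_eq b1 b2 : b1 \in bases M -> b2 \in bases M -> #|b1| = #|b2|.
Proof.
move=> + b2B; have [n] := ubnP #|b1 :\: b2|; elim: n b1 => // n IH b1 lt_n b1B.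
have [/eqP|[x xD]] := set_0Vmem (b1 :\: b2).
  by rewrite setD_eq0 => /(base_subset_eq b1B b2B) ->.
case: matM => _ _ exch; have [y yD b1'B] := exch b1 b2 b1B b2B x xD.
move: xD yD; rewrite !inE => /andP[xNb2 xb1] /andP[yNb1 yb2].
rewrite -(IH _ _ b1'B).
  by rewrite setUC cardsU1 (cardsD1 x b1) xb1 !inE negb_and yNb1 orbT.
rewrite ltnS in lt_n; apply: leq_trans lt_n; rewrite (cardsD1 x (b1 :\: b2)) !inE xNb2 xb1.
apply: subset_leq_card; apply/subsetP => z; rewrite !inE.
by case/andP=> zNb2 /orP[/andP[zx zb1] | /eqP zy]; [rewrite zx zNb2 zb1 | rewrite zy yb2 in zNb2].
Qed.

Lemma base_sub_ground b : b \in bases M -> b \subset ground M.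
Proof. by case: matM => _ sub_ground _; apply: sub_ground. Qed.

Lemma card_base b : b \in bases M -> #|b| = rank M (ground M).
Proof.
case: matM => _ ground_b _ bB; apply/eqP; rewrite eq_sym eqn_leq; apply/andP; split.
  apply/bigmax_leqP => b' b'B; rewrite (card_bases_eq bB b'B).
  by rewrite subset_leq_card ?subsetIr.
by apply: leq_trans (leq_bigmax_cond _ bB); rewrite (setIidPr (ground_b b bB)).
Qed.

Lemma indep_sub_base X : indep X -> exists2 b, b \in bases M & X \subset b.
Proof.
case: matM => /set0Pn[b0 b0B] _ _ indX.
have [|b bB rankE] := @eq_bigmax_cond _ (mem (bases M)) (fun b => #|X :&: b|).
  by apply/card_gt0P; exists b0.
exists b => //; suff <-: X :&: b = X by rewrite subsetIr.
by apply/eqP; rewrite eqEcard subsetIl -rankE; move: indX => /= <-.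
Qed.

End Rank.

Section Union.
Variable T : finType.
Implicit Types (M : matroid T) (E Z : {set T}).

Definition union_family M1 M2 := [set b1 :|: b2 | b1 in bases M1, b2 in bases M2].

Lemma bases_dsum0 M E : bases (dsum M (zero_matroid E)) = bases M.
Proof.
apply/setP => Z; apply/imset2P/idP => [[b1 b2 b1B /set1P -> ->] | ZB].
  by rewrite setU0.
by exists Z set0; rewrite ?inE ?setU0.
Qed.

Lemma principal_sum_basesE MS MQ A B :
  let U := union_family (M_SB MS A B) MQ in
  bases (principal_sum MS MQ A B) = [set Z in U | maxset (mem U) Z].
Proof. by rewrite /principal_sum /munion /union_family !bases_dsum0. Qed.

Lemma maxset_max_card (U : {set {set T}}) n Z :
  (forall W, W \in U -> #|W| <= n) -> Z \in U -> #|Z| = n -> maxset (mem U) Z.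
Proof.
move=> leUn ZU cardZ; apply/maxsetP; split=> // W WU ZW.
by apply/eqP; rewrite eq_sym eqEcard ZW cardZ leUn.
Qed.

End Union.

Section PrincipalSum.
Variables (T : finType) (S Q : {set T}) (MS MQ : matroid T) (A B : {set T}).
Hypotheses (disjSQ : [disjoint S & Q]) (matMS : is_matroid MS) (groundMS : ground MS = S)
  (matMQ : is_matroid MQ) (groundMQ : ground MQ = Q)
  (subAS : A \subset S) (subBQ : B \subset Q).
Implicit Types X Y Z b : {set T}.

Local Notation rS := (rank MS S).
Local Notation rQ := (rank MQ Q).
Local Notation MSB := (M_SB MS A B).
Local Notation U := (union_family MSB MQ).

Lemma disjoint_SQ X Y : X \subset S -> Y \subset Q -> [disjoint X & Y].
Proof. by move=> XS YQ; apply: disjointW XS YQ disjSQ. Qed.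

Lemma setU_SQ_inj X Y X' Y' : X \subset S -> Y \subset Q -> X' \subset S -> Y' \subset Q ->
  X :|: Y = X' :|: Y' -> X = X' /\ Y = Y'.
Proof.
have partS X0 Y0 : X0 \subset S -> Y0 \subset Q -> (X0 :|: Y0) :&: S = X0.
  by move=> X0S Y0Q; rewrite setIUl_id // disjoint_sym (disjoint_SQ (subxx S)).
have partQ X0 Y0 : X0 \subset S -> Y0 \subset Q -> (X0 :|: Y0) :&: Q = Y0.
  by move=> X0S Y0Q; rewrite setUC setIUl_id // (disjoint_SQ X0S).
move=> XS YQ X'S Y'Q XY.
by split; [rewrite -(partS X Y) // XY partS | rewrite -(partQ X Y) // XY partQ].
Qed.

Lemma M_SB_baseE X (B1 : {set T}) : X \subset S -> B1 \subset B ->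
  X :|: B1 \in bases MSB <-> [/\ indep MS X, spanning MS (X :|: A) & #|X| + #|B1| = rS].
Proof.
move=> XS B1B; have BS : [disjoint B & S] by rewrite disjoint_sym (disjoint_SQ (subxx S)).
have B1S : [disjoint B1 & S] := disjointWl B1B BS.
have XB : [disjoint X & B] by rewrite disjoint_sym (disjointWr XS BS).
have SB : [disjoint S & B] by rewrite disjoint_sym.
rewrite inE /rank_SB /= groundMS setUSS // (setIUl_id XS B1S) (setIUl_id (subxx S) BS).
rewrite [in (X :|: B1) :&: B]setUC [in (S :|: B) :&: B]setUC.
rewrite (setIUl_id B1B XB) (setIUl_id (subxx B) SB).
rewrite (setUidPl subAS) subnn min0n addn0 cardsU_disjoint ?(disjointWr B1B XB) //.
rewrite addn_minn_eq ?rank_leq_card ?rankS ?subsetUl // /indep /spanning groundMS.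
split=> [/and3P[_ /andP[/eqP indX le_XB1] /eqP cardE] | [indX spanXA cardE]].
  by split=> //; rewrite -cardE.
by move: indX => /= ->; rewrite cardE !eqxx spanXA.
Qed.

Lemma M_SB_base_split b : b \in bases MSB ->
  exists X (B1 : {set T}), [/\ X \subset S, B1 \subset B & b = X :|: B1].
Proof.
rewrite inE groundMS => /andP[/setIidPl bSB _].
by exists (b :&: S), (b :&: B); rewrite !subsetIr -setIUr bSB.
Qed.

Lemma card_M_SB_base b : b \in bases MSB -> #|b| = rS.
Proof.
move=> bB; have [X [B1 [XS B1B bE]]] := M_SB_base_split bB.
move: bB; rewrite bE => /(M_SB_baseE XS B1B)[_ _ <-].
by rewrite cardsU_disjoint // (disjoint_SQ XS (subset_trans B1B subBQ)).
Qed.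

(* An element of B can always be traded for one of S: the independent set X
   extends to a base of MS, which is larger than X as long as B1 is nonempty. *)
Lemma M_SB_base_exchange X (B1 : {set T}) y : X \subset S -> B1 \subset B ->
  X :|: B1 \in bases MSB -> y \in B1 ->
  exists2 x, x \in S :\: X & (x |: X) :|: (B1 :\ y) \in bases MSB.
Proof.
move=> XS B1B /(M_SB_baseE XS B1B)[indX spanXA cardXB1] yB1.
have [b bB Xb] := indep_sub_base matMS indX.
have bS : b \subset S by rewrite -groundMS base_sub_ground.
have /card_gt0P[x] : 0 < #|b :\: X|.
  by rewrite cardsDS // (card_base matMS bB) groundMS -cardXB1 (cardsD1 y B1) yB1 addKn.
rewrite inE => /andP[xNX xb]; exists x; first by rewrite inE xNX (subsetP bS).
apply/M_SB_baseE.
- by rewrite subUset sub1set (subsetP bS).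
- exact: subset_trans (subD1set B1 y) B1B.
split.
- by apply: sub_base_indep bB _; rewrite subUset sub1set xb.
- by apply: leq_trans spanXA (rankS _ _); rewrite setSU // subsetUr.
- by rewrite cardsU1 xNX -cardXB1 (cardsD1 y B1) yB1 addnCA addnA.
Qed.

Lemma M_SB_base_swap X X' (B1 B1' : {set T}) :
  X \subset S -> X' \subset S -> B1 \subset B -> B1' \subset B ->
  X :|: B1 \in bases MSB -> X' :|: B1' \in bases MSB -> #|X'| = #|X| ->
  X' :|: B1 \in bases MSB.
Proof.
move=> XS X'S B1B B1'B /(M_SB_baseE XS B1B)[_ _ cardXB1].
case/(M_SB_baseE X'S B1'B) => indX' spanX' _ cardX'.
by apply/(M_SB_baseE X'S B1B); split; rewrite // cardX'.
Qed.

Lemma card_union_family Z : Z \in U -> #|Z| <= rS + rQ.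
Proof.
case/imset2P => b1 b2 b1B b2B ->.
rewrite -(card_M_SB_base b1B) -groundMQ -(card_base matMQ b2B).
exact: leq_card_setU.
Qed.

Lemma card_principal_sum_base Z : Z \in bases (principal_sum MS MQ A B) -> #|Z| = rS + rQ.
Proof.
rewrite principal_sum_basesE inE => /andP[/imset2P[b1 b2 b1B b2B ->] /maxsetP[_ Zmax]].
have b2Q : b2 \subset Q by rewrite -groundMQ base_sub_ground.
have [b12|[y]] := set_0Vmem (b1 :&: b2).
  by rewrite cardsU b12 cards0 subn0 (card_M_SB_base b1B) (card_base matMQ b2B) groundMQ.
have [X [B1 [XS B1B b1E]]] := M_SB_base_split b1B.
rewrite b1E in b1B Zmax *; rewrite !inE => /andP[/orP[yX | yB1] yb2].
  by move: (subsetP b2Q y yb2); rewrite (disjointFr disjSQ (subsetP XS y yX)).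
have [x /setDP[xS xNX] b1'B] := M_SB_base_exchange XS B1B b1B yB1.
pose Z' := (x |: X) :|: (B1 :\ y) :|: b2.
have Z'U : Z' \in U by apply/imset2P; exists ((x |: X) :|: (B1 :\ y)) b2.
have ZZ' : X :|: B1 :|: b2 \subset Z'.
  apply/subsetP => z; rewrite !inE; have [-> | zNy] := eqVneq z y; first by rewrite yb2 !orbT.
  by case/orP=> [/orP[] | ] ->; rewrite ?orbT.
have : x \in Z' by rewrite !inE eqxx.
rewrite (Zmax Z' Z'U ZZ') -setUA inE (negbTE xNX) /=.
have B1b2Q : B1 :|: b2 \subset Q by rewrite subUset b2Q (subset_trans B1B subBQ).
by move/(subsetP B1b2Q); rewrite (disjointFr disjSQ xS).
Qed.

Lemma principal_sum_baseP Z :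
  reflect (Z \in U /\ #|Z| = rS + rQ) (Z \in bases (principal_sum MS MQ A B)).
Proof.
apply: (iffP idP) => [ZB | [ZU cardZ]].
  by split; [move: ZB; rewrite principal_sum_basesE inE => /andP[] | exact: card_principal_sum_base].
by rewrite principal_sum_basesE inE ZU (maxset_max_card card_union_family).
Qed.

Lemma union_family_SQP X Y : X \subset S -> Y \subset Q ->
  X :|: Y \in U <-> exists (B1 b2 : {set T}),
    [/\ B1 \subset B, X :|: B1 \in bases MSB, b2 \in bases MQ & Y = B1 :|: b2].
Proof.
move=> XS YQ; split=> [/imset2P[b1 b2 b1B b2B XYE] | [B1 [b2 [_ XB1B b2B ->]]]]; last first.
  by apply/imset2P; exists (X :|: B1) b2; rewrite ?setUA.
have [X1 [B1 [X1S B1B b1E]]] := M_SB_base_split b1B.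
have B1b2Q : B1 :|: b2 \subset Q.
  by rewrite subUset (subset_trans B1B subBQ) -groundMQ base_sub_ground.
have [XE YE] : X = X1 /\ Y = B1 :|: b2 by apply: setU_SQ_inj; rewrite // XYE b1E setUA.
by exists B1, b2; rewrite XE -b1E.
Qed.

Theorem principal_sum_SQ_complete : SQ_complete S Q (principal_sum MS MQ A B).
Proof.
move=> bS bS' bQ bQ' bSS bS'S bQQ bQ'Q /principal_sum_baseP[_ card1].
move=> /principal_sum_baseP[U2 card2] /principal_sum_baseP[U3 card3].
rewrite (cardsU_disjoint (disjoint_SQ bSS bQQ)) in card1.
rewrite (cardsU_disjoint (disjoint_SQ bSS bQ'Q)) in card2.
rewrite (cardsU_disjoint (disjoint_SQ bS'S bQQ)) in card3.
have cardbS' : #|bS'| = #|bS| by apply/eqP; rewrite -(eqn_add2r #|bQ|) card1 card3.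
have [B1 [b2 [B1B bSB1 b2B bQ'E]]] := (union_family_SQP bSS bQ'Q).1 U2.
have [B1' [_ [B1'B bS'B1' _ _]]] := (union_family_SQP bS'S bQQ).1 U3.
apply/principal_sum_baseP; rewrite (cardsU_disjoint (disjoint_SQ bS'S bQ'Q)) cardbS'.
split=> //; apply/(union_family_SQP bS'S bQ'Q); exists B1, b2; split=> //.
exact: M_SB_base_swap bSB1 bS'B1' cardbS'.
Qed.

End PrincipalSum.

Theorem corollary3 (T : finType) (S Q : {set T}) (MS MQ : matroid T)
    (A B : {set T}) :
  [disjoint S & Q] ->
  is_matroid MS -> ground MS = S ->
  is_matroid MQ -> ground MQ = Q ->
  A \subset S -> B \subset Q ->
  SQ_complete S Q (principal_sum MS MQ A B).
Proof. exact: principal_sum_SQ_complete. Qed.
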